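(* For $j\in\mathbb{Z}_{\ge0}$, \[ C_j(x)=\frac{q^{-1}\lambda}{1+q^{-1}x}B_j(x)+\frac{\beta_E(j)\beta_E(j+1)-q^{-1}\lambda\,\beta_E(j)^2}{1+q^{-1}x}, \] where $B_j(x)=\sum_{l\ge0}\beta_E(l+j)^2x^l$ and $C_j(x)=\sum_{l\ge0}\beta_E(l+j+1)\beta_E(l+j)x^l$ (formal power series in $x$).
   Context: $F$ is a $p$-adic field with odd residue cardinality $q$, uniformizer $\varpi$. $\pi$ is an irreducible unitary unramified representation of $\mathrm{GL}_2(F)$ with trivial central character, a quotient of $\chi\times\chi^{-1}$ with $\chi$ unramified; $\alpha=\chi(\varpi)$ and $\lambda=q^{1/2}(\alpha+\alpha^{-1})\in\mathbb{R}$. $\phi$ is the spherical unit vector, $E$ a quadratic étale algebra over $F$, $\alpha_E(\phi_1,\phi_2)=\int_{F^\times\backslash E^\times}\langle\pi(t)\phi_1,\phi_2\rangle d^\times t$ with $\alpha_E(\phi,\phi)\ne0$, and $\beta_E(l)=\alpha_E(\pi(\mathrm{diag}(\varpi^{-l},1))\phi,\phi)/\alpha_E(\phi,\phi)$. These satisfy $q\beta_E(l+2)-\lambda\beta_E(l+1)+\beta_E(l)=0$ for $l\ge0$, $\beta_E(0)=1$. *)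

From HB Require Import structures.
From mathcomp Require Import all_boot all_order all_algebra.
Set Implicit Arguments. Unset Strict Implicit. Unset Printing Implicit Defensive.
Import Order.TTheory GRing.Theory Num.Theory.
Local Open Scope ring_scope.

(* Formal power series in one variable x over a field K, represented by their
   coefficient sequences: f = \sum_l f l * x^l. *)
Definition fps (K : fieldType) := nat -> K.

Definition fps_add (K : fieldType) (f g : fps K) : fps K := fun n => f n + g n.

Definition fps_mul (K : fieldType) (f g : fps K) : fps K :=
  fun n => \sum_(k < n.+1) f k * g (n - k)%N.

Definition fps_const (K : fieldType) (c : K) : fps K :=
  fun n => if n == 0%N then c else 0.
Definition fps_X (K : fieldType) : fps K := fun n => if n == 1%N then 1 else 0.

Definition fps_scale (K : fieldType) (c : K) (f : fps K) : fps K := fun n => c * f n.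

(* Multiplicative inverse of a series with invertible constant term:
   b_0 = a_0^-1, b_n = - a_0^-1 * \sum_{k=1}^n a_k b_{n-k}.
   inv_seq a n is the list [b_0; ...; b_n]. *)
Fixpoint inv_seq (K : fieldType) (a : fps K) (n : nat) : seq K :=
  match n with
  | 0 => [:: (a 0%N)^-1]
  | m.+1 => let s := inv_seq a m in
            rcons s (- (a 0%N)^-1 *
                       \sum_(k < m.+1) a k.+1 * nth 0 s (m - k)%N)
  end.

Definition fps_inv (K : fieldType) (a : fps K) : fps K :=
  fun n => nth 0 (inv_seq a n) n.

Definition fps_div (K : fieldType) (f g : fps K) : fps K := fps_mul f (fps_inv g).

Definition Bser (K : fieldType) (beta : nat -> K) (j : nat) : fps K :=
  fun l => beta (l + j)%N ^+ 2.
Definition Cser (K : fieldType) (beta : nat -> K) (j : nat) : fps K :=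
  fun l => beta (l + j).+1 * beta (l + j)%N.

From HB Require Import structures.
From mathcomp Require Import all_boot all_order all_algebra.
From mathcomp Require Import ring.
From Stdlib Require Import FunctionalExtensionality.
Import Order.TTheory GRing.Theory Num.Theory.
Local Open Scope ring_scope.

(* Dividing by [1 + c x] means solving [g_(n+1) + c g_n = f_(n+1)], [g_0 = f_0].
   For [f = q^-1 lam B_j + const] and [g = C_j] this recursion is the three-term
   recurrence multiplied by [beta(n+j+1)]:
   [beta(n+j+2) beta(n+j+1) + q^-1 beta(n+j+1) beta(n+j) = q^-1 lam beta(n+j+1)^2]. *)

Lemma fps_mulDl (K : fieldType) (f g h : fps K) :
  fps_mul (fps_add f g) h = fps_add (fps_mul f h) (fps_mul g h).
Proof.
apply: functional_extensionality => n.
by rewrite /fps_mul /fps_add -big_split; apply: eq_bigr => k _; rewrite mulrDl.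
Qed.

Section DivisionByOnePlusScaleX.

Variables (K : fieldType) (c : K).

Let den : fps K := fps_add (fps_const 1) (fps_scale c (@fps_X K)).

Lemma inv_seq_one_plus_scaleX n : inv_seq den n = mkseq (fun i => (- c) ^+ i) n.+1.
Proof.
have den0 : den 0%N = 1 by rewrite /den /fps_add /fps_scale /fps_X /= mulr0 addr0.
elim: n => [|n IHn]; first by rewrite /= den0 invr1.
rewrite [inv_seq _ n.+1]/= IHn [RHS]mkseqS; congr rcons.
rewrite big_ord_recl big1 => [|i _]; last first.
  by rewrite /den /fps_add /fps_const /fps_scale /fps_X /= mulr0 addr0 mul0r.
rewrite den0 invr1 /den /fps_add /fps_const /fps_scale /fps_X /=.
by rewrite subn0 nth_mkseq // exprS; ring.
Qed.

Lemma fps_div_one_plus_scaleX f n :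
  fps_div f den n = \sum_(k < n.+1) f k * (- c) ^+ (n - k).
Proof.
apply: eq_bigr => k _.
by rewrite /fps_inv inv_seq_one_plus_scaleX nth_mkseq // ltnS leq_subr.
Qed.

Lemma fps_div_one_plus_scaleX_unique f g :
  g 0%N = f 0%N -> (forall n, g n.+1 + c * g n = f n.+1) -> g = fps_div f den.
Proof.
move=> g0 gS; apply: functional_extensionality => n.
rewrite fps_div_one_plus_scaleX; elim: n => [|n IHn].
  by rewrite big_ord1 subn0 expr0 mulr1.
rewrite big_ord_recr /= subnn expr0 mulr1.
have -> : g n.+1 = f n.+1 + (- c) * g n by rewrite -gS; ring.
rewrite IHn mulr_sumr addrC; congr (_ + _); apply: eq_bigr => k _.
by rewrite subSn 1?exprS 1?mulrCA // -ltnS.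
Qed.

End DivisionByOnePlusScaleX.

Lemma Cser_succ {K : fieldType} {a lam : K} {beta : nat -> K} :
  a != 0 -> (forall l, a * beta l.+2 - lam * beta l.+1 + beta l = 0) ->
  forall j n, Cser beta j n.+1 + a^-1 * Cser beta j n = a^-1 * lam * Bser beta j n.+1.
Proof.
move=> a_neq0 rec j n; rewrite /Cser /Bser addSn.
have -> : beta (n + j).+2 = a^-1 * (lam * beta (n + j).+1 - beta (n + j)).
  apply: (mulfI a_neq0); rewrite mulrA divff // mul1r.
  by apply/eqP; rewrite -subr_eq0 -(rec (n + j)%N); apply/eqP; ring.
ring.
Qed.

Theorem lemma4p2 (C : numClosedFieldType) (q : nat) (lam : C) (beta : nat -> C) :
  (exists p k : nat, prime p /\ q = (p ^ k.+1)%N) -> odd q ->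
  lam \is Num.real ->
  beta 0%N = 1 ->
  (forall l : nat, q%:R * beta l.+2 - lam * beta l.+1 + beta l = 0) ->
  forall j : nat,
    let qi := (q%:R : C)^-1 in
    let den := fps_add (fps_const 1) (fps_scale qi (@fps_X C)) in
    Cser beta j =
    fps_add
      (fps_div (fps_scale (qi * lam) (Bser beta j)) den)
      (fps_div (fps_const (beta j * beta j.+1 - qi * lam * beta j ^+ 2)) den).
Proof.
move=> [p [k [p_prime ->]]] _ _ _ rec j qi den.
have q_neq0 : (p ^ k.+1)%N%:R != 0 :> C by rewrite pnatr_eq0 -lt0n expn_gt0 prime_gt0.
rewrite /fps_div -fps_mulDl.
apply: fps_div_one_plus_scaleX_unique => [|n].
  by rewrite /Cser /Bser /fps_add /fps_scale /fps_const /=; ring.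
by rewrite (Cser_succ q_neq0 rec) /fps_add /fps_scale /fps_const /Bser /= addr0.
Qed.
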